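(* Let $G=(V,E,w)$ be an $\mathbb{N}^k$-labeled complete directed graph, let $Q\subseteq E$ be a set of pairwise vertex-disjoint paths, and let $G'=(V',E',w')=\mathrm{contract}_Q(G)$. Then for every Hamiltonian cycle $T'\subseteq E'$ of $G'$, the edge set $T=\mathrm{expand}_Q(T')$ is a Hamiltonian cycle of $G$ with $w(T)=w'(T')+w(Q)$.
   Context: An $\mathbb{N}^k$-labeled complete directed graph is $G=(V,E,w)$ with $V$ finite, $E=\{(u,v)\in V\times V: u\neq v\}$, $w\colon E\to\mathbb{N}^k$; $w$ is extended to edge sets by summation. Paths and cycles are identified with their edge sets; a Hamiltonian cycle visits every vertex exactly once. For an edge $(u,v)\in E$: $\mathrm{contract}_{(u,v)}(G)=(V\setminus\{v\},\{e\in E: v \text{ not incident to } e\},w')$ where $w'(x,y)=w(x,y)$ for $x\ne u$ and $w'(u,z)=w(v,z)$. For a path $P=u_0,e_1,u_1,\dots,e_r,u_r$: $\mathrm{contract}_P(G)=\mathrm{contract}_{e_1}(\mathrm{contract}_{e_2}(\cdots\mathrm{contract}_{e_r}(G)\cdots))$. For a set $Q$ of pairwise vertex-disjoint paths $P_1,\dots,P_r$: $\mathrm{contract}_Q(G)=\mathrm{contract}_{P_1}(\cdots\mathrm{contract}_{P_r}(G)\cdots)$. For an edge set $T$ (Hamiltonian cycle of a contracted graph): $\mathrm{expand}_{(u,v)}(T)=\{(x,y)\in T: x\ne u\}\cup\{(u,v)\}\cup\{(v,x):(u,x)\in T\}$; $\mathrm{expand}_P(T)=\mathrm{expand}_{e_r}(\mathrm{expand}_{e_{r-1}}(\cdots\mathrm{expand}_{e_1}(T)\cdots))$;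 $\mathrm{expand}_Q(T)=\mathrm{expand}_{P_r}(\cdots\mathrm{expand}_{P_1}(T)\cdots)$. Here $w(Q)$ is the total weight of all edges of all paths in $Q$. *)

From mathcomp Require Import all_boot.
Set Implicit Arguments. Unset Strict Implicit. Unset Printing Implicit Defensive.

(* An N^k-labeled complete directed graph: the vertex set V is a finite set of
   elements of a finType T; the edge set is E = {(u,v) in V x V | u <> v};
   the label of (u,v) is the vector (wt G u v i)_{i < k} (only its values on
   edges matter). *)
Record graph (T : finType) (k : nat) := Graph {
  vert : {set T};
  wt : T -> T -> 'I_k -> nat }.

Section Defs.
Variables (T : finType) (k : nat).
Implicit Types (G : graph T k) (C : {set T * T}) (P : seq T) (Q : seq (seq T)).

Definition edges G : {set T * T} :=
  [set e : T * T | [&& e.1 \in vert G, e.2 \in vert G & e.1 != e.2]].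

Definition wset G C (i : 'I_k) : nat := \sum_(e in C) wt G e.1 e.2 i.

Definition hamiltonian_cycle G C : Prop :=
  C \subset edges G /\
  exists s : seq T,
    [/\ uniq s, 2 <= size s, (forall x, (x \in s) = (x \in vert G)) &
        C = [set e : T * T | (e.1 \in s) && (e.2 == next s e.1)]].

Definition contract_edge G (u v : T) : graph T k :=
  Graph (vert G :\ v) (fun x y => if x == u then wt G v y else wt G x y).

(* a path P = u_0, ..., u_r is given by its vertex sequence;
   contract_P(G) = contract_{e_1}(contract_{e_2}(... contract_{e_r}(G))) *)
Fixpoint contract_path G P : graph T k :=
  match P with
  | u :: s => match s with
              | [::] => G
              | v :: _ => contract_edge (contract_path G s) u v
              end
  | [::] => G
  end.

Definition contract_paths G Q : graph T k :=
  foldr (fun P H => contract_path H P) G Q.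

Definition expand_edge (u v : T) C : {set T * T} :=
  [set e in C | e.1 != u] :|: [set (u, v)] :|: [set (v, e.2) | e in C & e.1 == u].

Fixpoint expand_path P C : {set T * T} :=
  match P with
  | u :: s => match s with
              | [::] => C
              | v :: _ => expand_path s (expand_edge u v C)
              end
  | [::] => C
  end.

Definition expand_paths Q C : {set T * T} :=
  foldl (fun C P => expand_path P C) C Q.

Definition path_edges P : seq (T * T) := zip P (behead P).

(* P is a (simple) path of G: nonempty, no repeated vertex, all vertices in V
   (consecutive vertices are then distinct, so all its edges lie in E). *)
Definition is_path G P : Prop :=
  [/\ P != [::], uniq P & {subset P <= vert G}].

Definition wpaths G Q (i : 'I_k) : nat :=
  \sum_(P <- Q) \sum_(e <- path_edges P) wt G e.1 e.2 i.

End Defs.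

From mathcomp Require Import all_boot.

(* Contracting the edge (u,v) of a Hamiltonian cycle's graph and then expanding
   it back splices v into the cycle right after u: the cycle u, y, ... becomes
   u, v, y, ..., which visits every vertex of the uncontracted graph.  The
   contracted graph gives u the out-labels of v, so the splice adds exactly the
   weight of (u,v).  Paths are handled edge by edge, and distinct paths of Q
   touch disjoint vertex sets, so contracting one never relabels another. *)

Set Implicit Arguments.
Unset Strict Implicit.
Unset Printing Implicit Defensive.

Lemma mem_zip_fst (S R : eqType) (s : seq S) (t : seq R) e :
  e \in zip s t -> e.1 \in s.
Proof.
elim: s t => [|x s IHs] [|y t] //=; rewrite !inE.
by case/orP=> [/eqP -> | /IHs ->]; rewrite ?eqxx ?orbT.
Qed.

Section Cycles.
Variable T : eqType.
Implicit Types (s t : seq T) (u v x y : T).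

Lemma next_skip u v s x : x != u -> x != v -> next [:: u, v & s] x = next (u :: s) x.
Proof. by move=> xu xv; case: s => [|y s]; rewrite /next /= (negbTE xu) (negbTE xv). Qed.

Lemma next_head u y s : next [:: u, y & s] u = y.
Proof. by rewrite /next /= eqxx. Qed.

Lemma next_second u v y s : v != u -> next [:: u, v, y & s] v = y.
Proof. by move=> vu; rewrite /next /= (negbTE vu) eqxx. Qed.

Lemma next_neq s x : uniq s -> 2 <= size s -> x \in s -> next s x != x.
Proof.
move=> us ss /rot_to[i [|y t] rot_s].
  by move: ss; rewrite -(size_rot i) rot_s.
rewrite -(next_rot i us) rot_s next_head; apply: contraTneq us => yx.
by rewrite -(rot_uniq i) rot_s yx /= mem_head.
Qed.

End Cycles.

Section Contraction.
Variables (T : finType) (k : nat).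
Implicit Types (G H : graph T k) (C : {set T * T}) (s t P : seq T) (Q : seq (seq T)).
Implicit Types (u v x y : T).

Definition cycle_edges s : {set T * T} :=
  [set e : T * T | (e.1 \in s) && (e.2 == next s e.1)].

Lemma mem_cycle_edges s a b : ((a, b) \in cycle_edges s) = (a \in s) && (b == next s a).
Proof. by rewrite inE. Qed.

Lemma cycle_edges_rot i s : uniq s -> cycle_edges (rot i s) = cycle_edges s.
Proof. by move=> us; apply/setP=> e; rewrite !inE mem_rot next_rot. Qed.

Lemma cycle_edges_sub G s : uniq s -> 2 <= size s -> {subset s <= vert G} ->
  cycle_edges s \subset edges G.
Proof.
move=> us ss sG; apply/subsetP=> [[x y]]; rewrite !inE /= => /andP[xs /eqP ->].
by rewrite sG // sG ?mem_next // eq_sym next_neq.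
Qed.

Lemma wset_cycle_edges G s i : uniq s ->
  wset G (cycle_edges s) i = \sum_(x <- s) wt G x (next s x) i.
Proof.
move=> us; have -> : cycle_edges s = [set (x, next s x) | x in s].
  apply/setP=> [[x y]]; rewrite inE /=; apply/andP/imsetP.
    by case=> xs /eqP ->; exists x.
  by case=> z zs [-> ->].
by rewrite /wset big_imset /= ?big_uniq // => x z _ _ [].
Qed.

Lemma hamiltonian_cycleP G C :
  hamiltonian_cycle G C <->
  exists s, [/\ uniq s, 2 <= size s, s =i vert G & C = cycle_edges s].
Proof.
split=> [[_ [s hs]] | [s [us ss sG ->]]]; first by exists s.
split; last by exists s.
by apply: cycle_edges_sub => // x; rewrite sG.
Qed.

Lemma hamiltonian_cycle_from G C u : hamiltonian_cycle G C -> u \in vert G ->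
  exists y t, [/\ uniq [:: u, y & t], [:: u, y & t] =i vert G &
                  C = cycle_edges [:: u, y & t]].
Proof.
case/hamiltonian_cycleP=> s [us ss sG ->]; rewrite -sG => /rot_to[i [|y t] rot_s].
  by move: ss; rewrite -(size_rot i) rot_s.
exists y, t; rewrite -rot_s -(cycle_edges_rot i us) rot_uniq; split=> // x.
by rewrite mem_rot.
Qed.

Lemma mem_expand_edge u v C a b :
  ((a, b) \in expand_edge u v C) =
  [|| ((a, b) \in C) && (a != u), (a == u) && (b == v) | (a == v) && ((u, b) \in C)].
Proof.
have memE : ((a, b) \in [set (v, e.2) | e in C & e.1 == u]) = (a == v) && ((u, b) \in C).
  apply/imsetP/andP.
    by case=> [[x z]]; rewrite inE /= => /andP[xzC /eqP xu] [-> ->]; subst x.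
  by case=> /eqP -> ubC; exists (u, b); rewrite // inE ubC eqxx.
by rewrite /expand_edge !inE memE xpair_eqE orbA.
Qed.

Lemma expand_edge_cycle u v y t : u != v -> v \notin [:: u, y & t] ->
  expand_edge u v (cycle_edges [:: u, y & t]) = cycle_edges [:: u, v, y & t].
Proof.
move=> uv vt.
apply/setP=> [[a b]]; rewrite mem_expand_edge !mem_cycle_edges next_head mem_head.
have [-> | au] := eqVneq a u.
  by rewrite !next_head !mem_head (negbTE uv) /= andbF orbF.
have [-> | av] := eqVneq a v.
  by rewrite (negbTE vt) next_second 1?eq_sym // !inE eqxx orbT.
by rewrite (@next_skip _ _ v) // !in_cons (negbTE au) (negbTE av) andbT !orbF.
Qed.

Lemma wt_contract_edge H u v x y :
  wt (contract_edge H u v) x y = if x == u then wt H v y else wt H x y.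
Proof. by []. Qed.

Lemma expand_edge_hamiltonian H C u v : u != v -> u \in vert H -> v \in vert H ->
  hamiltonian_cycle (contract_edge H u v) C ->
  hamiltonian_cycle H (expand_edge u v C) /\
  forall i, wset H (expand_edge u v C) i = wset (contract_edge H u v) C i + wt H u v i.
Proof.
move=> uv uH vH hamC.
have uH' : u \in vert (contract_edge H u v) by rewrite !inE uv uH.
have [y [t [ut utH ->]]] := hamiltonian_cycle_from hamC uH'.
have vt : v \notin [:: u, y & t] by rewrite utH !inE eqxx.
have uvt : uniq [:: u, v, y & t].
  by move: ut vt; rewrite /= !inE !negb_or uv => /andP[-> ->] /andP[_ ->].
rewrite expand_edge_cycle //; split.
  apply/hamiltonian_cycleP; exists [:: u, v, y & t]; split=> // x.
  have -> : (x \in [:: u, v, y & t]) = (x == v) || (x \in [:: u, y & t]).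
    by rewrite !inE orbCA.
  by rewrite utH !inE; have [-> | _] := eqVneq x v.
move=> i; rewrite !wset_cycle_edges // 2![in LHS]big_cons [in RHS]big_cons !next_head.
rewrite [RHS]addnC wt_contract_edge eqxx next_second 1?eq_sym //.
congr (_ + (_ + _)); apply: eq_big_seq => x xt.
have xu : x != u by apply: contraTneq xt => ->; case/andP: ut.
have xv : x != v by apply: contraTneq xt => ->; move: vt; rewrite !inE negb_or => /andP[].
by rewrite wt_contract_edge (negbTE xu) next_skip.
Qed.

Lemma wt_contract_path G P x : x \notin P -> wt (contract_path G P) x = wt G x.
Proof.
elim: P => [|u [|v s] IHP] //=; rewrite inE negb_or => /andP[xu xP].
by rewrite (negbTE xu) IHP.
Qed.

Lemma vert_contract_path G P x :
  (x \in vert (contract_path G P)) = (x \in vert G) && (x \notin behead P).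
Proof.
elim: P => [|u [|v s] IHP] /=; rewrite ?andbT //.
by rewrite in_setD1 IHP /= inE negb_or; case: (x == v); rewrite ?andbF.
Qed.

Lemma expand_path_hamiltonian G P C : uniq P -> {subset P <= vert G} ->
  hamiltonian_cycle (contract_path G P) C ->
  hamiltonian_cycle G (expand_path P C) /\
  forall i, wset G (expand_path P C) i =
    wset (contract_path G P) C i + \sum_(e <- path_edges P) wt G e.1 e.2 i.
Proof.
elim: P C => [|u [|v s] IHP] C /=;
  try by move=> _ _ hamC; split=> // i; rewrite /path_edges /= big_nil addn0.
rewrite inE negb_or => /andP[/andP[uv us] uvs] PG hamC.
have vH : v \in vert (contract_path G (v :: s)).
  by rewrite vert_contract_path PG ?inE ?eqxx ?orbT //=; case/andP: uvs.
have uH : u \in vert (contract_path G (v :: s)) by rewrite vert_contract_path PG ?mem_head.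
have [hamE wE] := expand_edge_hamiltonian uv uH vH hamC.
have vsG : {subset v :: s <= vert G} by move=> x xs; rewrite PG // in_cons xs orbT.
have [hamF wF] := IHP _ uvs vsG hamE.
split=> // i; rewrite wF wE wt_contract_path ?inE ?negb_or ?uv //.
by rewrite /path_edges /= big_cons /= -!addnA.
Qed.

Definition avoids Q x := forall P, P \in Q -> x \notin P.

Lemma avoids_cons P Q x : avoids (P :: Q) x -> x \notin P /\ avoids Q x.
Proof. by move=> xPQ; split=> [|P' P'Q]; apply: xPQ; rewrite inE ?eqxx ?P'Q ?orbT. Qed.

Lemma vert_contract_paths G Q x : x \in vert G -> avoids Q x ->
  x \in vert (contract_paths G Q).
Proof.
elim: Q => [|P Q IHQ] //= xG /avoids_cons[xP xQ].
by rewrite vert_contract_path IHQ //; apply: contra xP; apply: mem_behead.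
Qed.

Lemma wt_contract_paths G Q x : avoids Q x -> wt (contract_paths G Q) x = wt G x.
Proof.
by elim: Q => [|P Q IHQ] //= /avoids_cons[xP xQ]; rewrite wt_contract_path ?IHQ.
Qed.

End Contraction.

Theorem proposition12 (T : finType) (k : nat) (G : graph T k) (Q : seq (seq T)) :
  (forall P, P \in Q -> is_path G P) ->
  pairwise (fun P1 P2 : seq T => [disjoint P1 & P2]) Q ->
  forall T' : {set T * T},
    hamiltonian_cycle (contract_paths G Q) T' ->
    hamiltonian_cycle G (expand_paths Q T') /\
    forall i : 'I_k,
      wset G (expand_paths Q T') i = wset (contract_paths G Q) T' i + wpaths G Q i.
Proof.
elim: Q => [|P Q IHQ] QG disjQ C hamC.
  by split=> // i; rewrite /wpaths big_nil addn0.
move: disjQ; rewrite pairwise_cons => /andP[disjP disjQ].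
have [_ uP PG] := QG P (mem_head _ _).
have avoidsP x : x \in P -> avoids Q x.
  by move=> xP P' P'Q; rewrite (disjointFr (allP disjP P' P'Q) xP).
have PG' : {subset P <= vert (contract_paths G Q)}.
  by move=> x xP; apply: vert_contract_paths; [apply: PG | apply: avoidsP].
have [hamE wE] := expand_path_hamiltonian uP PG' hamC.
have QG' P' : P' \in Q -> is_path G P' by move=> P'Q; apply: QG; rewrite in_cons P'Q orbT.
have [hamF wF] := IHQ QG' disjQ _ hamE.
split=> // i; rewrite /expand_paths /= -/(expand_paths Q _) wF wE.
rewrite /wpaths big_cons -/(wpaths G Q i) addnA; congr (_ + _ + _).
by apply: eq_big_seq => e /mem_zip_fst eP; rewrite wt_contract_paths //; apply: avoidsP.
Qed.
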